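(* Let $A$ be a DFA and let $\tilde{A}$ be the DFA obtained from $A$ by the following minimization procedure: first remove all states not reachable from the initial state; then partition the remaining states into Myhill–Nerode classes (classes of indistinguishable states); then, for each class, repeatedly apply elementary merge operations merging two states of the class until each class is collapsed into a single state. If $A$ contains a single closed communicating class and this class is aperiodic, then $\tilde{A}$ also contains a single closed communicating class and this class is aperiodic.
   Context: An NFA is a tuple $A = \langle \Sigma, Q, q_0, \tau, \phi\rangle$ with finite alphabet $\Sigma$, finite state set $Q$, initial state $q_0$, transition function $\tau : Q \times \Sigma \to 2^Q$ and termination function $\phi : Q \to \{0,1\}$; $\tau$ extends to strings by $\tau(q,\lambda) = \{q\}$, $\tau(q, x\sigma) = \bigcup_{q' \in \tau(q,x)} \tau(q',\sigma)$, and to sets by $\tau(S, X) = \bigcup_{q\in S, x \in X}\tau(q,x)$; write $\tau_1(S) = \tau(S,\Sigma)$, $\tau_\star(S) = \tau(S,\Sigma^\star)$. A DFA is an NFA with $|\tau(q,\sigma)| = 1$ for all $q,\sigma$. The language of $A$ is the set of strings $x$ such that $\phi(q) = 1$ for some $q \in \tau(q_0,x)$; two states $q,q'$ are indistinguishable if the NFAs obtained from $A$ by making $q$, resp. $q'$, the initial state accept the same language. A state $q'$ is reachable if $q' \in \tau_\star(q_0)$. States $q,q'$ communicate if $q' \in \tau_\star(q)$ and $q \in \tau_\star(q')$; the equivalence classes are communicating classes, and a class $Q'$ is closed if $\tau_\star(Q') = Q'$. For $k>1$ a closed communicating class $Q'$ is $k$-periodic if it has a partition into $k$ parts $Q'_0,\ldots,Q'_{k-1}$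 with $\tau_1(Q'_i) = Q'_{(i+1)\bmod k}$ for all $i$; it is aperiodic if it is not $k$-periodic for any $k>1$. Given NFAs $A$ and $\tilde{A} = \langle \Sigma, \tilde{Q}, \tilde{q}_0, \tilde{\tau}, \tilde{\phi}\rangle$, $\tilde{A}$ is obtained from $A$ by a merge operation $\Psi : Q \to \tilde{Q}$ if $\Psi$ is surjective, $\Psi(q_0) = \tilde{q}_0$, $\phi(q) = \tilde{\phi}(\Psi(q))$ for all $q$, and $q' \in \tau(q,\sigma)$ implies $\Psi(q') \in \tilde{\tau}(\Psi(q),\sigma)$. The merge is elementary if $|\tilde{Q}| = |Q| - 1$ (exactly two states are identified). *)

From mathcomp Require Import all_boot.
Set Implicit Arguments. Unset Strict Implicit. Unset Printing Implicit Defensive.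

Record nfa (Sigma : finType) := NFA {
  state :> finType;
  q0 : state;
  tau : state -> Sigma -> {set state};
  phi : state -> bool
}.

Section Defs.
Variable Sigma : finType.
Implicit Types A : nfa Sigma.

Definition tau_str A (q : A) (x : seq Sigma) : {set A} :=
  foldl (fun (S : {set A}) s => \bigcup_(q' in S) tau q' s) [set q] x.

Definition tau1 A (S : {set A}) : {set A} :=
  \bigcup_(q in S) \bigcup_(s : Sigma) tau q s.

Definition reaches A (q q' : A) : Prop := exists x, q' \in tau_str q x.

Definition reachable A (q : A) : Prop := reaches (q0 A) q.

Definition is_dfa A : Prop := forall (q : A) (s : Sigma), #|tau q s| = 1.

Definition accepts A (q : A) (x : seq Sigma) : bool :=
  [exists q' in tau_str q x, phi q'].

Definition indistinguishable A (q q' : A) : Prop :=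
  forall x, accepts q x = accepts q' x.

Definition communicate A (q q' : A) : Prop := reaches q q' /\ reaches q' q.

Definition comm_class A (C : {set A}) : Prop :=
  exists q : A, forall q' : A, q' \in C <-> communicate q q'.

Definition closed_class A (C : {set A}) : Prop :=
  forall q' : A, (exists2 q, q \in C & reaches q q') <-> q' \in C.

Definition k_periodic A (k : nat) (C : {set A}) : Prop :=
  1 < k /\
  exists P : nat -> {set A},
    [/\ (forall i, i < k -> P i != set0),
        (forall i j, i < j -> j < k -> [disjoint P i & P j]),
        \bigcup_(i < k) P i = C &
        (forall i, i < k -> tau1 (P i) = P (i.+1 %% k))].

Definition aperiodic A (C : {set A}) : Prop :=
  forall k, 1 < k -> ~ k_periodic k C.

Definition unique_closed_class_aperiodic A : Prop :=
  exists C : {set A},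
    [/\ comm_class C, closed_class C, aperiodic C &
        forall C' : {set A}, comm_class C' -> closed_class C' -> C' = C].

(* Psi is a merge operation from the sub-automaton of reachable states of A
   onto At (Psi is only relevant on reachable states). *)
Definition merge_from_reachable A (At : nfa Sigma) (Psi : A -> At) : Prop :=
  [/\ (forall p : At, exists2 q : A, reachable q & Psi q = p),
      Psi (q0 A) = q0 At,
      (forall q : A, reachable q -> phi q = phi (Psi q)) &
      (forall (q q' : A) (s : Sigma), reachable q -> q' \in tau q s ->
          Psi q' \in tau (Psi q) s)].

(* At is the DFA produced by the minimization procedure: the composite of all
   the merges is a merge from the reachable part of A whose fibres are exactly
   the Myhill--Nerode classes of reachable states. *)
Definition minimization_of A (At : nfa Sigma) : Prop :=
  is_dfa At /\
  exists Psi : A -> At,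
    merge_from_reachable Psi /\
    (forall q q' : A, reachable q -> reachable q' ->
       (Psi q = Psi q' <-> indistinguishable q q')).

End Defs.

(* Every state of A reaches its unique closed class C; in particular C consists
   of reachable states.  Since At is a DFA, the transitions of At out of Psi q
   are exactly the images of those of A out of q, so paths of At starting in
   Psi(C) lift to paths of A starting in C.  Hence Psi(C) is a closed
   communicating class of At, and it is the only one because every state of At
   reaches it.  A k-periodic partition of Psi(C) pulls back along Psi to a
   partition of C whose parts tau1 maps into one another cyclically; as every
   state of a closed communicating class with two or more states has a
   predecessor in the class, these inclusions are equalities and C would be
   k-periodic. *)

From mathcomp Require Import all_boot.
Set Implicit Arguments. Unset Strict Implicit. Unset Printing Implicit Defensive.

Lemma succ_mod_inj k i j : i < k -> j < k -> i.+1 %% k = j.+1 %% k -> i = j.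
Proof. by move=> ik jk /eqP; rewrite -[i.+1]addn1 -[j.+1]addn1 eqn_modDr !modn_small // => /eqP. Qed.

Lemma disjoint_family_uniq (T : finType) (P : nat -> {set T}) k i j x :
  (forall i j, i < j -> j < k -> [disjoint P i & P j]) ->
  i < k -> j < k -> x \in P i -> x \in P j -> i = j.
Proof.
move=> dis ik jk Hi Hj; case: (ltngtP i j) => // ij.
- by rewrite (disjointFr (dis _ _ ij jk) Hi) in Hj.
- by rewrite (disjointFr (dis _ _ ij ik) Hj) in Hi.
Qed.

Section Reachability.
Variables (Sigma : finType) (A : nfa Sigma).
Implicit Types (q r : A) (C D : {set A}).

Lemma tau_str0 q : tau_str q [::] = [set q].
Proof. by []. Qed.

Lemma tau_str_rcons q x s :
  tau_str q (rcons x s) = \bigcup_(r in tau_str q x) tau r s.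
Proof. by rewrite /tau_str foldl_rcons. Qed.

Lemma mem_tau1 (S : {set A}) r r' s : r \in S -> r' \in tau r s -> r' \in tau1 S.
Proof. by move=> Hr Hs; apply/bigcupP; exists r => //; apply/bigcupP; exists s. Qed.

Lemma reaches_refl q : reaches q q.
Proof. by exists [::]; rewrite tau_str0 set11. Qed.

Lemma reaches_stepr q r r' s : reaches q r -> r' \in tau r s -> reaches q r'.
Proof.
by case=> x Hx Hs; exists (rcons x s); rewrite tau_str_rcons; apply/bigcupP; exists r.
Qed.

Lemma reaches_step q q' s : q' \in tau q s -> reaches q q'.
Proof. exact: reaches_stepr (reaches_refl q). Qed.

Lemma reaches_ind (P : A -> Prop) q :
  P q -> (forall r r' s, reaches q r -> P r -> r' \in tau r s -> P r') ->
  forall q', reaches q q' -> P q'.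
Proof.
move=> Pq IH q' [x]; elim/last_ind: x q' => [|x s IHx] q'.
  by rewrite tau_str0 inE => /eqP ->.
rewrite tau_str_rcons => /bigcupP [r Hr Hs].
by apply: (IH r) Hs; [exists x | apply: IHx].
Qed.

Lemma reaches_trans q1 q2 q3 : reaches q1 q2 -> reaches q2 q3 -> reaches q1 q3.
Proof. by move=> H12; apply: (reaches_ind (P := reaches q1) H12) => r r' s _; apply: reaches_stepr. Qed.

Lemma reaches_last q q' :
  reaches q q' -> q' = q \/ exists r s, reaches q r /\ q' \in tau r s.
Proof.
by apply: (reaches_ind (P := fun q' => _ \/ _)) => [|r r' s Hr _ Hs]; [left | right; exists r, s].
Qed.

Definition succ_rel : rel A := fun q q' => [exists s, q' \in tau q s].

Lemma reachesP q q' : reflect (reaches q q') (connect succ_rel q q').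
Proof.
apply: (iffP idP).
  case/connectP=> p; elim/last_ind: p q' => [|p r IH] q' /=.
    by move=> _ ->; apply: reaches_refl.
  rewrite rcons_path last_rcons => /andP [Hp /existsP [s Hs]] ->.
  exact: reaches_stepr (IH _ Hp erefl) Hs.
apply: (reaches_ind (P := connect succ_rel q)) => [|r r' s _ Hr Hs]; first exact: connect0.
by apply: connect_trans Hr (connect1 _); apply/existsP; exists s.
Qed.

Lemma comm_class_mem C c :
  comm_class C -> c \in C -> forall q, q \in C <-> communicate c q.
Proof.
case=> c0 HC /HC [H0c Hc0] q; split=> [/HC [H0q Hq0] | [Hcq Hqc]].
  by split; [exact: reaches_trans Hc0 H0q | exact: reaches_trans Hq0 H0c].
by apply/HC; split; [exact: reaches_trans H0c Hcq | exact: reaches_trans Hqc Hc0].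
Qed.

Lemma comm_class_nonempty C : comm_class C -> exists c, c \in C.
Proof. by case=> c HC; exists c; apply/HC; split; apply: reaches_refl. Qed.

Lemma comm_class_reaches C c c' : comm_class C -> c \in C -> c' \in C -> reaches c c'.
Proof. by move=> HC Hc /(comm_class_mem HC Hc) []. Qed.

Lemma closed_class_reaches C c q : closed_class C -> c \in C -> reaches c q -> q \in C.
Proof. by move=> clC Hc Hq; apply/clC; exists c. Qed.

Lemma closed_class_eq C D c d :
  comm_class C -> closed_class C -> comm_class D ->
  c \in C -> d \in D -> reaches c d -> C = D.
Proof.
move=> HC clC HD Hc Hd Hcd; have HdC := closed_class_reaches clC Hc Hcd.
apply/setP=> q; apply/idP/idP => Hq.
  exact/(comm_class_mem HD Hd)/(comm_class_mem HC HdC).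
exact/(comm_class_mem HC HdC)/(comm_class_mem HD Hd).
Qed.

Lemma comm_class_pred C c q' :
  comm_class C -> closed_class C -> c \in C -> q' \in C -> c != q' ->
  exists r s, r \in C /\ q' \in tau r s.
Proof.
move=> HC clC Hc Hq' cq'.
case: (reaches_last (comm_class_reaches HC Hc Hq')) => [Eq | [r [s [Hr Hs]]]].
  by rewrite Eq eqxx in cq'.
by exists r, s; split=> //; apply: closed_class_reaches clC Hc Hr.
Qed.

Definition reach_set q : {set A} := [set q' | connect succ_rel q q'].

Lemma exists_terminal q :
  exists2 r, reaches q r & forall r', reaches r r' -> reaches r' r.
Proof.
have [r /reachesP Hqr Hmin] := arg_minnP (fun r => #|reach_set r|) (connect0 succ_rel q).
exists r => // r' Hrr'.
have sub : reach_set r' \subset reach_set r.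
  apply/subsetP => y; rewrite !inE => /reachesP Hy.
  exact/reachesP/(reaches_trans Hrr' Hy).
have /eqP E : reach_set r' == reach_set r.
  by rewrite eqEcard sub Hmin //; apply/reachesP/(reaches_trans Hqr Hrr').
have : r \in reach_set r by rewrite inE connect0.
by rewrite -E inE => /reachesP.
Qed.

Lemma terminal_closed_class r :
  (forall r', reaches r r' -> reaches r' r) ->
  comm_class (reach_set r) /\ closed_class (reach_set r).
Proof.
move=> term; split.
  exists r => q; rewrite inE; split=> [/reachesP Hq | [/reachesP //]].
  by split; last exact: term.
move=> q; split=> [[c] | Hq]; last by exists q => //; apply: reaches_refl.
rewrite !inE => /reachesP Hc Hcq; exact/reachesP/(reaches_trans Hc Hcq).
Qed.

Lemma reaches_unique_closed_class C q :
  (forall C', comm_class C' -> closed_class C' -> C' = C) ->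
  exists2 c, c \in C & reaches q c.
Proof.
move=> uC; have [r Hqr term] := exists_terminal q.
have [HR clR] := terminal_closed_class term.
by exists r => //; rewrite -(uC _ HR clR) inE connect0.
Qed.

Lemma k_periodic_of_tau1_sub k C (Q : nat -> {set A}) :
  1 < k -> comm_class C -> closed_class C ->
  (forall i, i < k -> Q i != set0) ->
  (forall i j, i < j -> j < k -> [disjoint Q i & Q j]) ->
  \bigcup_(i < k) Q i = C ->
  (forall i, i < k -> tau1 (Q i) \subset Q (i.+1 %% k)) ->
  k_periodic k C.
Proof.
move=> k1 HC clC Qne Qdis Qcov Qsub; split=> //; exists Q; split=> // i ik.
have k0 : 0 < k by apply: ltn_trans k1.
have memQ j q : j < k -> q \in Q j -> q \in C.
  by move=> jk Hq; rewrite -Qcov; apply/bigcupP; exists (Ordinal jk).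
apply/eqP; rewrite eqEsubset Qsub //=; apply/subsetP => q' Hq'.
have q'C := memQ _ _ (ltn_pmod _ k0) Hq'.
have [c cC cq'] : exists2 c, c \in C & c != q'.
  have /set0Pn [x Hx] := Qne 0 k0; have /set0Pn [y Hy] := Qne 1 k1.
  have xy : x != y.
    by apply/eqP => Exy; move: Hy; rewrite -Exy => /(disjoint_family_uniq Qdis k0 k1 Hx).
  case: (eqVneq x q') => [Exq | ?]; last by exists x; first exact: memQ Hx.
  by exists y; [exact: memQ Hy | rewrite -Exq eq_sym].
have [r [s [rC Hs]]] := comm_class_pred HC clC cC q'C cq'.
have [j jk rQ] : exists2 j, j < k & r \in Q j.
  by move: rC; rewrite -Qcov => /bigcupP [j _ Hj]; exists j.
have q'T : q' \in tau1 (Q j) := mem_tau1 rQ Hs.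
have q'Q : q' \in Q (j.+1 %% k) := subsetP (Qsub j jk) _ q'T.
have E := disjoint_family_uniq Qdis (ltn_pmod _ k0) (ltn_pmod _ k0) q'Q Hq'.
by rewrite -(succ_mod_inj jk ik E).
Qed.

End Reachability.

Section Merge.
Variables (Sigma : finType) (A At : nfa Sigma) (Psi : A -> At).
Hypotheses (dA : is_dfa A) (dAt : is_dfa At) (mP : merge_from_reachable Psi).
Implicit Types (q : A) (p : At).

Lemma merge_step q q' s : reachable q -> q' \in tau q s -> Psi q' \in tau (Psi q) s.
Proof. by case: mP => _ _ _; apply. Qed.

Lemma tau_merge q s : reachable q -> tau (Psi q) s = Psi @: tau q s.
Proof.
move=> Hq; have /eqP/cards1P [q' E] := dA q s.
have /eqP/cards1P [p E'] := dAt (Psi q) s.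
have Hq' : q' \in tau q s by rewrite E set11.
by move: (merge_step Hq Hq'); rewrite E E' imset_set1 inE => /eqP ->.
Qed.

Lemma merge_reaches q q' : reachable q -> reaches q q' -> reaches (Psi q) (Psi q').
Proof.
move=> Hq; apply: (reaches_ind (P := fun q' => reaches (Psi q) (Psi q'))).
  exact: reaches_refl.
move=> r r' s Hr IH Hs; exact: reaches_stepr IH (merge_step (reaches_trans Hq Hr) Hs).
Qed.

Lemma reaches_merge q p :
  reachable q -> reaches (Psi q) p -> exists2 q', reaches q q' & p = Psi q'.
Proof.
move=> Hq; apply: (reaches_ind (P := fun p => exists2 q', _ & p = Psi q')).
  by exists q => //; apply: reaches_refl.
move=> p1 p2 s _ [q' Hqq' ->]; rewrite tau_merge; last exact: reaches_trans Hq Hqq'.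
by case/imsetP=> q'' Hq'' ->; exists q''; first exact: reaches_stepr Hqq' Hq''.
Qed.

Variable C : {set A}.
Hypotheses (HC : comm_class C) (clC : closed_class C).
Hypothesis reachC : forall c, c \in C -> reachable c.

Lemma merge_image_closed c p : c \in C -> reaches (Psi c) p -> p \in Psi @: C.
Proof.
move=> Hc /(reaches_merge (reachC Hc)) [q Hcq ->].
exact/imset_f/(closed_class_reaches clC Hc Hcq).
Qed.

Lemma merge_image_communicate c c' :
  c \in C -> c' \in C -> communicate (Psi c) (Psi c').
Proof.
by move=> Hc Hc'; split; apply: merge_reaches (reachC _) (comm_class_reaches HC _ _).
Qed.

Lemma merge_image_class : comm_class (Psi @: C) /\ closed_class (Psi @: C).
Proof.
have [c Hc] := comm_class_nonempty HC; split.
  exists (Psi c) => p; split=> [/imsetP [c' Hc' ->] | [Hp _]].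
    exact: merge_image_communicate.
  exact: merge_image_closed Hc Hp.
move=> p; split=> [[p' /imsetP [c' Hc' ->]] | Hp]; first exact: merge_image_closed.
by exists p => //; apply: reaches_refl.
Qed.

Lemma merge_k_periodic k : k_periodic k (Psi @: C) -> k_periodic k C.
Proof.
case=> k1 [P [Pne Pdis Pcov Ptau]].
have memP i p : i < k -> p \in P i -> p \in Psi @: C.
  by move=> ik Hp; rewrite -Pcov; apply/bigcupP; exists (Ordinal ik).
apply: (@k_periodic_of_tau1_sub _ _ _ _ (fun i => C :&: Psi @^-1: P i)) => //.
- move=> i ik; have /set0Pn [p Hp] := Pne i ik.
  have /imsetP [c Hc E] := memP _ _ ik Hp.
  by apply/set0Pn; exists c; rewrite !inE Hc -E Hp.
- move=> i j ij jk; rewrite disjoint_subset; apply/subsetP => q.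
  rewrite !inE => /andP [_ Hi]; apply/negP => /andP [_ Hj].
  have Eij := disjoint_family_uniq Pdis (ltn_trans ij jk) jk Hi Hj.
  by rewrite Eij ltnn in ij.
- apply/setP => q; apply/bigcupP/idP => [[i _] | Hq]; first by rewrite inE => /andP [].
  move: (imset_f Psi Hq); rewrite -Pcov => /bigcupP [i _ Hi].
  by exists i; rewrite // !inE Hq.
- move=> i ik; apply/subsetP => q' /bigcupP [q]; rewrite !inE => /andP [Hq HPq].
  case/bigcupP=> s _ Hs.
  rewrite (closed_class_reaches clC Hq (reaches_step Hs)) -Ptau //=.
  exact: mem_tau1 HPq (merge_step (reachC Hq) Hs).
Qed.

Lemma merge_aperiodic : aperiodic C -> aperiodic (Psi @: C).
Proof. by move=> apC k k1 /merge_k_periodic; apply: apC. Qed.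

End Merge.

Theorem theorem4 (Sigma : finType) (A At : nfa Sigma) :
  is_dfa A ->
  minimization_of A At ->
  unique_closed_class_aperiodic A ->
  unique_closed_class_aperiodic At.
Proof.
move=> dA [dAt [Psi [mP _]]] [C [HC clC apC uC]].
have reachC c : c \in C -> reachable c.
  move=> Hc; have [c0 Hc0 H0] := reaches_unique_closed_class (q0 A) uC.
  exact: reaches_trans H0 (comm_class_reaches HC Hc0 Hc).
have [HD clD] := merge_image_class dA dAt mP HC clC reachC.
exists (Psi @: C); split=> // [|D HD' clD']; first exact: merge_aperiodic.
have [d Hd] := comm_class_nonempty HD'.
have [q Hq Eqd] : exists2 q, reachable q & Psi q = d by case: mP => surj _ _ _.
have [c Hc Hqc] := reaches_unique_closed_class q uC.
rewrite -Eqd in Hd.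
exact: closed_class_eq HD' clD' HD Hd (imset_f Psi Hc) (merge_reaches mP Hq Hqc).
Qed.
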